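(* Let $K\ge2$ and $T\ge1$. Suppose arms $A_1,A_2,\dots\in[K]$ are chosen by any (possibly randomized, history-dependent) rule, and in each round $t$, given the past and $A_t$, $B_t$ is drawn uniformly from $[K]\setminus\{A_t\}$. Let $Z_t^a=\sum_{s=1}^t\mathbb 1(B_s=a)$. Then \[ \mathbb E\Big[\max_{a\in[K]}Z_{T-1}^a\Big]\le\frac{T-1}{K-1}+\sqrt{\frac T2\ln\!\big(\sqrt T(K-1)\big)}+2\sqrt T . \]
   Context: $[K]=\{1,\dots,K\}$. *)

From Stdlib Require Import Reals List Arith.
Import ListNotations.
Open Scope R_scope.

Definition arms (K : nat) : list nat := List.seq 1 K.

Definition lsum {A : Type} (l : list A) (f : A -> R) : R :=
  fold_right Rplus 0 (map f l).

(* A history is the chronological list of pairs (A_s, B_s). *)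
Definition history := list (nat * nat).

(* A randomized, history-dependent arm-selection rule:
   pi h a = probability of choosing arm a in the next round given history h. *)
Definition policy := history -> nat -> R.

Definition is_policy (K : nat) (pi : policy) : Prop :=
  (forall h a, 0 <= pi h a) /\ (forall h, lsum (arms K) (pi h) = 1).

(* Expectation of f(history after n more rounds), starting from history h:
   A_t ~ pi h, then B_t uniform on [K] \ {A_t}. *)
Fixpoint expval (K : nat) (pi : policy) (n : nat) (h : history)
    (f : history -> R) : R :=
  match n with
  | O => f h
  | S n' =>
      lsum (arms K) (fun a =>
        pi h a *
        lsum (filter (fun b => negb (Nat.eqb b a)) (arms K)) (fun b =>
          / INR (K - 1) * expval K pi n' (h ++ [(a, b)]) f))
  end.

Definition Zcount (h : history) (a : nat) : nat :=
  length (filter (fun p => Nat.eqb (snd p) a) h).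

Definition maxZ (K : nat) (h : history) : nat :=
  fold_right Nat.max 0%nat (map (Zcount h) (arms K)).

(* For each arm a, the count Z^a minus its compensator (the sum of the one-round
   probabilities (1 - pi(a)) / (K - 1) that B_s = a) is a martingale M^a, and the
   compensator is at most n / (K - 1) after n rounds.  The sum of squares
   V = sum_a (M^a)^2 grows in expectation by at most 2 per round, since the
   squared increments sum to at most 2, and max_a |M^a| <= sqrt V.  Using
   sqrt V <= c / 2 + V / (2 c) with c = sqrt T keeps the argument linear in V,
   giving E[max_a Z^a_{T-1}] <= (T - 1) / (K - 1) + c / 2 + (T - 1) / c, which is
   below the claimed bound even without its logarithmic term. *)

From Stdlib Require Import Reals List Arith Lra Lia.
Import ListNotations.
Open Scope R_scope.

Lemma lsum_nil {A} (f : A -> R) : lsum [] f = 0.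
Proof. reflexivity. Qed.

Lemma lsum_cons {A} (x : A) (l : list A) (f : A -> R) :
  lsum (x :: l) f = f x + lsum l f.
Proof. reflexivity. Qed.

Lemma lsum_ext_in {A} (l : list A) (f g : A -> R) :
  (forall x, In x l -> f x = g x) -> lsum l f = lsum l g.
Proof.
  induction l as [|y l IH]; intros H; rewrite ?lsum_nil, ?lsum_cons; auto.
  rewrite H, IH; auto with datatypes.
Qed.

Lemma lsum_le_in {A} (l : list A) (f g : A -> R) :
  (forall x, In x l -> f x <= g x) -> lsum l f <= lsum l g.
Proof.
  induction l as [|y l IH]; intros H; rewrite ?lsum_nil, ?lsum_cons; [lra|].
  apply Rplus_le_compat; auto with datatypes.
Qed.

Lemma lsum_plus {A} (l : list A) (f g : A -> R) :
  lsum l (fun x => f x + g x) = lsum l f + lsum l g.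
Proof. induction l; rewrite ?lsum_nil, ?lsum_cons; [lra | rewrite IHl; ring]. Qed.

Lemma lsum_scal_l {A} (l : list A) (c : R) (f : A -> R) :
  lsum l (fun x => c * f x) = c * lsum l f.
Proof. induction l; rewrite ?lsum_nil, ?lsum_cons; [ring | rewrite IHl; ring]. Qed.

Lemma lsum_const {A} (l : list A) (c : R) :
  lsum l (fun _ => c) = INR (length l) * c.
Proof.
  induction l; rewrite ?lsum_nil, ?lsum_cons; simpl length; [simpl; ring|].
  rewrite IHl, S_INR; ring.
Qed.

Lemma lsum_nonneg {A} (l : list A) (f : A -> R) :
  (forall x, 0 <= f x) -> 0 <= lsum l f.
Proof.
  intros H. rewrite <- (Rmult_0_r (INR (length l))), <- lsum_const.
  apply lsum_le_in; auto.
Qed.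

Lemma lsum_ge_term {A} (l : list A) (f : A -> R) (a : A) :
  (forall x, 0 <= f x) -> In a l -> f a <= lsum l f.
Proof.
  intros H. induction l as [|y l IH]; intros Ha; [destruct Ha|].
  rewrite lsum_cons. destruct Ha as [<-|Ha].
  - pose proof (lsum_nonneg l f H). lra.
  - specialize (IH Ha). specialize (H y). lra.
Qed.

Lemma lsum_comm {A B} (l1 : list A) (l2 : list B) (f : A -> B -> R) :
  lsum l1 (fun x => lsum l2 (f x)) = lsum l2 (fun y => lsum l1 (fun x => f x y)).
Proof.
  induction l1; rewrite ?lsum_nil, ?lsum_cons.
  - rewrite (lsum_ext_in _ _ (fun _ => 0)) by reflexivity. rewrite lsum_const; ring.
  - rewrite IHl1, <- lsum_plus. apply lsum_ext_in; intros; rewrite lsum_cons; ring.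
Qed.

Lemma lsum_filter {A} (p : A -> bool) (l : list A) (f : A -> R) :
  lsum (filter p l) f = lsum l (fun x => if p x then f x else 0).
Proof.
  induction l; simpl filter; rewrite ?lsum_nil, ?lsum_cons; auto.
  destruct (p a); rewrite ?lsum_cons, IHl; ring.
Qed.

Lemma lsum_select (l : list nat) (a : nat) (f : nat -> R) : NoDup l -> In a l ->
  lsum l (fun x => if Nat.eqb x a then f x else 0) = f a.
Proof.
  induction l as [|y l IH]; intros Hl Ha; [destruct Ha|].
  apply NoDup_cons_iff in Hl as [Hy Hl]. rewrite lsum_cons.
  destruct (Nat.eqb_spec y a) as [<-|Hya].
  - rewrite (lsum_ext_in _ _ (fun _ => 0)), lsum_const; [ring|].
    intros x Hx. destruct (Nat.eqb_spec x y); [subst; contradiction | reflexivity].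
  - destruct Ha as [->|Ha]; [contradiction|]. rewrite IH; auto; ring.
Qed.

Lemma arms_NoDup (K : nat) : NoDup (arms K).
Proof. apply seq_NoDup. Qed.

Lemma length_arms (K : nat) : length (arms K) = K.
Proof. apply length_seq. Qed.

Definition other_arms (K a : nat) : list nat :=
  filter (fun b => negb (Nat.eqb b a)) (arms K).

Lemma lsum_other_arms (K a : nat) (g : nat -> R) : In a (arms K) ->
  lsum (other_arms K a) g = lsum (arms K) g - g a.
Proof.
  intros Ha. unfold other_arms. rewrite lsum_filter.
  rewrite <- (lsum_select (arms K) a g) by (auto using arms_NoDup).
  assert (Hsplit : lsum (arms K) g = lsum (arms K) (fun y =>
    (if negb (Nat.eqb y a) then g y else 0) + (if Nat.eqb y a then g y else 0))).
  { apply lsum_ext_in; intros y _. destruct (Nat.eqb y a); simpl; ring. }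
  rewrite Hsplit, lsum_plus. ring.
Qed.

Definition indic (b a : nat) : R := if Nat.eqb b a then 1 else 0.

Lemma lsum_indic (K b : nat) : In b (arms K) -> lsum (arms K) (indic b) = 1.
Proof.
  intros Hb. rewrite (lsum_ext_in _ _ (fun a => if Nat.eqb a b then 1 else 0)).
  - apply (lsum_select _ _ (fun _ => 1)); auto using arms_NoDup.
  - intros; unfold indic; rewrite Nat.eqb_sym; auto.
Qed.

(* Conditional expectation, given the history [h], of a function [G A B] of the next round. *)
Definition round_mean (K : nat) (pi : policy) (h : history) (G : nat -> nat -> R) : R :=
  lsum (arms K) (fun a => pi h a * lsum (other_arms K a) (fun b => / INR (K - 1) * G a b)).

Lemma expval_S (K : nat) (pi : policy) (n : nat) (h : history) (f : history -> R) :
  expval K pi (S n) h f = round_mean K pi h (fun a b => expval K pi n (h ++ [(a, b)]) f).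
Proof. reflexivity. Qed.

(* Probability that the next [B] equals [a]. *)
Definition hit_prob (K : nat) (pi : policy) (h : history) (a : nat) : R :=
  (1 - pi h a) / INR (K - 1).

Lemma round_mean_plus (K : nat) (pi : policy) (h : history) (G G' : nat -> nat -> R) :
  round_mean K pi h (fun a b => G a b + G' a b) = round_mean K pi h G + round_mean K pi h G'.
Proof.
  unfold round_mean. rewrite <- lsum_plus. apply lsum_ext_in; intros.
  rewrite <- Rmult_plus_distr_l, <- lsum_plus. f_equal. apply lsum_ext_in; intros; ring.
Qed.

Lemma round_mean_scal_l (K : nat) (pi : policy) (h : history) (c : R) (G : nat -> nat -> R) :
  round_mean K pi h (fun a b => c * G a b) = c * round_mean K pi h G.
Proof.
  unfold round_mean. rewrite <- lsum_scal_l. apply lsum_ext_in; intros a _.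
  rewrite (lsum_ext_in _ _ (fun b => c * (/ INR (K - 1) * G a b))) by (intros; ring).
  rewrite lsum_scal_l; ring.
Qed.

Lemma round_mean_lsum {A} (K : nat) (pi : policy) (h : history) (l : list A)
    (F : A -> nat -> nat -> R) :
  round_mean K pi h (fun a b => lsum l (fun i => F i a b))
  = lsum l (fun i => round_mean K pi h (F i)).
Proof.
  unfold round_mean. rewrite <- lsum_comm. apply lsum_ext_in; intros a _.
  rewrite (lsum_scal_l l (pi h a)). f_equal.
  rewrite <- lsum_comm. apply lsum_ext_in; intros b _. symmetry; apply lsum_scal_l.
Qed.

Lemma round_mean_ext_in (K : nat) (pi : policy) (h : history) (G G' : nat -> nat -> R) :
  (forall a b, In a (arms K) -> In b (arms K) -> G a b = G' a b) ->
  round_mean K pi h G = round_mean K pi h G'.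
Proof.
  intros H. unfold round_mean. apply lsum_ext_in; intros a Ha. f_equal.
  apply lsum_ext_in; intros b Hb. unfold other_arms in Hb. apply filter_In in Hb.
  rewrite H; tauto.
Qed.

Section OneRound.

Variables (K : nat) (pi : policy).
Hypothesis HK : (2 <= K)%nat.
Hypothesis Hpi : is_policy K pi.

Lemma INR_K_pred_pos : 0 < INR (K - 1).
Proof. apply lt_0_INR; lia. Qed.

Lemma INR_K_pred : INR (K - 1) = INR K - 1.
Proof. rewrite minus_INR by lia; simpl; ring. Qed.

Lemma round_mean_le_in (h : history) (G G' : nat -> nat -> R) :
  (forall a b, In a (arms K) -> In b (arms K) -> G a b <= G' a b) ->
  round_mean K pi h G <= round_mean K pi h G'.
Proof.
  intros H. destruct Hpi as [Hp _]. pose proof INR_K_pred_pos.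
  unfold round_mean. apply lsum_le_in; intros a Ha.
  apply Rmult_le_compat_l; auto. apply lsum_le_in; intros b Hb.
  unfold other_arms in Hb. apply filter_In in Hb.
  apply Rmult_le_compat_l; [left; apply Rinv_0_lt_compat; lra | apply H; tauto].
Qed.

Lemma round_mean_const (h : history) (c : R) : round_mean K pi h (fun _ _ => c) = c.
Proof.
  destruct Hpi as [_ Hs]. pose proof INR_K_pred_pos. unfold round_mean.
  rewrite (lsum_ext_in _ _ (fun a => c * pi h a)).
  - rewrite lsum_scal_l, Hs; ring.
  - intros a Ha. rewrite lsum_other_arms, lsum_const, length_arms by auto.
    rewrite INR_K_pred in *. field; lra.
Qed.

Lemma round_mean_indic (h : history) (a : nat) : In a (arms K) ->
  round_mean K pi h (fun _ b => indic b a) = hit_prob K pi h a.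
Proof.
  intros Ha. destruct Hpi as [_ Hs]. unfold round_mean, hit_prob.
  rewrite (lsum_ext_in _ _ (fun x => / INR (K - 1) * pi h x
             + (- / INR (K - 1)) * (if Nat.eqb x a then pi h x else 0))).
  - rewrite lsum_plus, !lsum_scal_l, Hs, lsum_select by auto using arms_NoDup.
    unfold Rdiv; ring.
  - intros x Hx. rewrite lsum_other_arms by auto.
    rewrite (lsum_ext_in _ _ (fun b => if Nat.eqb b a then / INR (K - 1) else 0))
      by (intros; unfold indic; destruct (Nat.eqb _ a); ring).
    rewrite (lsum_select _ _ (fun _ => / INR (K - 1))) by auto using arms_NoDup.
    unfold indic. destruct (Nat.eqb x a); ring.
Qed.

Lemma hit_prob_bounds (h : history) (a : nat) : In a (arms K) ->
  0 <= hit_prob K pi h a <= / INR (K - 1).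
Proof.
  intros Ha. destruct Hpi as [Hp Hs].
  assert (Hle1 : pi h a <= 1) by (rewrite <- (Hs h); apply lsum_ge_term; auto).
  specialize (Hp h a). pose proof INR_K_pred_pos.
  unfold hit_prob, Rdiv. split.
  - apply Rmult_le_pos; [lra | left; apply Rinv_0_lt_compat; lra].
  - rewrite <- (Rmult_1_l (/ INR (K - 1))) at 2.
    apply Rmult_le_compat_r; [left; apply Rinv_0_lt_compat|]; lra.
Qed.

Lemma lsum_hit_prob (h : history) : lsum (arms K) (hit_prob K pi h) = 1.
Proof.
  destruct Hpi as [_ Hs]. pose proof INR_K_pred_pos. unfold hit_prob.
  rewrite (lsum_ext_in _ _ (fun a => / INR (K - 1) * 1 + (- / INR (K - 1)) * pi h a))
    by (intros; unfold Rdiv; ring).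
  rewrite lsum_plus, !lsum_scal_l, lsum_const, Hs, length_arms.
  rewrite INR_K_pred in *. field; lra.
Qed.

(* Each squared increment is at most the increment's two terms, which sum to 1 each over the arms. *)
Lemma lsum_sq_increment_le (h : history) (b : nat) : In b (arms K) ->
  lsum (arms K) (fun a => Rsqr (indic b a - hit_prob K pi h a)) <= 2.
Proof.
  intros Hb.
  apply Rle_trans with (lsum (arms K) (fun a => indic b a + hit_prob K pi h a)).
  - apply lsum_le_in; intros a Ha.
    assert (1 <= INR (K - 1)) by (apply (le_INR 1); lia).
    assert (/ INR (K - 1) <= 1) by (rewrite <- Rinv_1; apply Rinv_le_contravar; lra).
    pose proof (hit_prob_bounds h a Ha).
    unfold indic, Rsqr. destruct (Nat.eqb b a); nra.
  - rewrite lsum_plus, lsum_indic, lsum_hit_prob by auto. lra.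
Qed.

End OneRound.

Fixpoint compensator (K : nat) (pi : policy) (a : nat) (pre rest : history) : R :=
  match rest with
  | [] => 0
  | p :: r => hit_prob K pi pre a + compensator K pi a (pre ++ [p]) r
  end.

Lemma compensator_snoc (K : nat) (pi : policy) (a : nat) (r : history) :
  forall (pre : history) (p : nat * nat),
  compensator K pi a pre (r ++ [p]) = compensator K pi a pre r + hit_prob K pi (pre ++ r) a.
Proof.
  induction r as [|q r IH]; intros pre p; simpl.
  - rewrite app_nil_r; ring.
  - rewrite IH, <- app_assoc. simpl. ring.
Qed.

Lemma compensator_le (K : nat) (pi : policy) (a : nat) (r : history) :
  (2 <= K)%nat -> is_policy K pi -> In a (arms K) ->
  forall pre, compensator K pi a pre r <= INR (length r) / INR (K - 1).
Proof.
  intros HK Hpi Ha. induction r as [|p r IH]; intros pre; simpl compensator.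
  - simpl. unfold Rdiv. lra.
  - pose proof (hit_prob_bounds K pi HK Hpi pre a Ha). specialize (IH (pre ++ [p])).
    simpl length. rewrite S_INR. unfold Rdiv in *. lra.
Qed.

Lemma Zcount_snoc (h : history) (a x b : nat) :
  INR (Zcount (h ++ [(x, b)]) a) = INR (Zcount h a) + indic b a.
Proof.
  unfold Zcount, indic. rewrite filter_app, length_app, plus_INR. simpl.
  destruct (Nat.eqb b a); simpl; ring.
Qed.

Definition centered_count (K : nat) (pi : policy) (h : history) (a : nat) : R :=
  INR (Zcount h a) - compensator K pi a [] h.

Lemma centered_count_snoc (K : nat) (pi : policy) (h : history) (a x b : nat) :
  centered_count K pi (h ++ [(x, b)]) a
  = centered_count K pi h a + (indic b a - hit_prob K pi h a).
Proof. unfold centered_count. rewrite Zcount_snoc, compensator_snoc. simpl. ring. Qed.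

Definition centered_sq_sum (K : nat) (pi : policy) (h : history) : R :=
  lsum (arms K) (fun a => Rsqr (centered_count K pi h a)).

Lemma centered_sq_sum_nonneg (K : nat) (pi : policy) (h : history) :
  0 <= centered_sq_sum K pi h.
Proof. apply lsum_nonneg; intros; apply Rle_0_sqr. Qed.

Lemma centered_sq_sum_nil (K : nat) (pi : policy) : centered_sq_sum K pi [] = 0.
Proof.
  unfold centered_sq_sum, centered_count.
  rewrite (lsum_ext_in _ _ (fun _ => 0)) by (intros; simpl; unfold Rsqr; ring).
  rewrite lsum_const; ring.
Qed.

(* The cross terms vanish because each increment has conditional mean zero. *)
Lemma round_mean_centered_sq_sum_le (K : nat) (pi : policy) (h : history) :
  (2 <= K)%nat -> is_policy K pi ->
  round_mean K pi h (fun x b => centered_sq_sum K pi (h ++ [(x, b)]))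
  <= centered_sq_sum K pi h + 2.
Proof.
  intros HK Hpi.
  set (M := centered_count K pi h). set (D := fun b a => indic b a - hit_prob K pi h a).
  rewrite (round_mean_ext_in _ _ _ _ (fun x b => lsum (arms K) (fun a =>
     Rsqr (M a) + (2 * M a) * D b a + Rsqr (D b a)))).
  2:{ intros x b _ _. unfold centered_sq_sum. apply lsum_ext_in; intros a _.
      rewrite centered_count_snoc. unfold M, D, Rsqr; ring. }
  rewrite round_mean_lsum.
  assert (Hcross : forall a, In a (arms K) -> round_mean K pi h (fun _ b => D b a) = 0).
  { intros a Ha. unfold D.
    rewrite (round_mean_ext_in _ _ _ _ (fun _ b => indic b a + (-1) * hit_prob K pi h a))
      by (intros; ring).
    rewrite round_mean_plus, round_mean_scal_l, round_mean_const, round_mean_indic by auto.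
    ring. }
  rewrite (lsum_ext_in _ _ (fun a => Rsqr (M a) + round_mean K pi h (fun _ b => Rsqr (D b a)))).
  2:{ intros a Ha. rewrite !round_mean_plus, round_mean_const, round_mean_scal_l, Hcross
        by auto. ring. }
  rewrite lsum_plus, <- round_mean_lsum. apply Rplus_le_compat_l.
  rewrite <- (round_mean_const K pi HK Hpi h 2).
  apply round_mean_le_in; auto. intros; apply lsum_sq_increment_le; auto.
Qed.

Lemma fold_max_le_sqrt_lsum_sq (l : list nat) (f : nat -> nat) (m : nat -> R) (c : R) :
  0 <= c -> (forall a, In a l -> INR (f a) <= c + Rabs (m a)) ->
  INR (fold_right Nat.max 0%nat (map f l)) <= c + sqrt (lsum l (fun a => Rsqr (m a))).
Proof.
  intros Hc. induction l as [|y l IH]; intros H.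
  - simpl. rewrite lsum_nil, sqrt_0. lra.
  - simpl fold_right. rewrite lsum_cons.
    pose proof (lsum_nonneg l (fun a => Rsqr (m a)) (fun a => Rle_0_sqr (m a))).
    pose proof (Rle_0_sqr (m y)).
    assert (Htail : sqrt (lsum l (fun a => Rsqr (m a)))
                    <= sqrt (Rsqr (m y) + lsum l (fun a => Rsqr (m a))))
      by (apply sqrt_le_1_alt; lra).
    assert (Hhead : Rabs (m y) <= sqrt (Rsqr (m y) + lsum l (fun a => Rsqr (m a))))
      by (rewrite <- sqrt_Rsqr_abs; apply sqrt_le_1_alt; lra).
    destruct (Nat.le_ge_cases (f y) (fold_right Nat.max 0%nat (map f l))).
    + rewrite Nat.max_r by auto. specialize (IH (fun a Ha => H a (or_intror Ha))). lra.
    + rewrite Nat.max_l by auto. specialize (H y (or_introl eq_refl)). lra.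
Qed.

Lemma maxZ_le (K : nat) (pi : policy) (h : history) : (2 <= K)%nat -> is_policy K pi ->
  INR (maxZ K h) <= INR (length h) / INR (K - 1) + sqrt (centered_sq_sum K pi h).
Proof.
  intros HK Hpi. apply fold_max_le_sqrt_lsum_sq.
  - pose proof (INR_K_pred_pos K HK). pose proof (pos_INR (length h)).
    unfold Rdiv. apply Rmult_le_pos; [|left; apply Rinv_0_lt_compat]; lra.
  - intros a Ha. pose proof (compensator_le K pi a h HK Hpi Ha []).
    pose proof (Rle_abs (centered_count K pi h a)). unfold centered_count in *. lra.
Qed.

Lemma expval_le_compat (K : nat) (pi : policy) (n : nat) :
  (2 <= K)%nat -> is_policy K pi -> forall (h : history) (f g : history -> R),
  (forall h', f h' <= g h') -> expval K pi n h f <= expval K pi n h g.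
Proof.
  intros HK Hpi. induction n; intros h f g H; [simpl; auto|].
  rewrite !expval_S. apply round_mean_le_in; auto.
Qed.

Lemma expval_drift_le (K : nat) (pi : policy) (n : nat) (d : R) (g : history -> R) :
  (2 <= K)%nat -> is_policy K pi ->
  (forall h, round_mean K pi h (fun x b => g (h ++ [(x, b)])) <= g h + d) ->
  forall h, expval K pi n h g <= g h + INR n * d.
Proof.
  intros HK Hpi H. induction n; intros h; [simpl; lra|].
  rewrite expval_S.
  apply Rle_trans with (round_mean K pi h (fun x b => g (h ++ [(x, b)]) + INR n * d)).
  - apply round_mean_le_in; auto.
  - rewrite round_mean_plus, round_mean_const by auto. specialize (H h). rewrite S_INR. lra.
Qed.

Lemma sqrt_le_tangent (x c : R) : 0 <= x -> 0 < c -> sqrt x <= c / 2 + x / (2 * c).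
Proof.
  intros Hx Hc. pose proof (sqrt_sqrt x Hx). pose proof (sqrt_pos x).
  apply Rmult_le_reg_l with (2 * c); [lra|].
  replace (2 * c * (c / 2 + x / (2 * c))) with (c * c + x) by (field; lra).
  pose proof (Rle_0_sqr (c - sqrt x)). unfold Rsqr in *. nra.
Qed.

Lemma expval_maxZ_le (K : nat) (pi : policy) (n : nat) (c : R) :
  (2 <= K)%nat -> is_policy K pi -> 0 < c ->
  expval K pi n [] (fun h => INR (maxZ K h)) <= INR n / INR (K - 1) + c / 2 + INR n / c.
Proof.
  intros HK Hpi Hc.
  set (g := fun h => INR (length h) / INR (K - 1) + c / 2 + centered_sq_sum K pi h / (2 * c)).
  apply Rle_trans with (expval K pi n [] g).
  { apply expval_le_compat; auto. intros h. unfold g.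
    pose proof (maxZ_le K pi h HK Hpi).
    pose proof (sqrt_le_tangent _ _ (centered_sq_sum_nonneg K pi h) Hc). lra. }
  eapply Rle_trans; [apply (expval_drift_le K pi n (/ INR (K - 1) + / c) g HK Hpi)|].
  - intros h. unfold g.
    rewrite (round_mean_ext_in _ _ _ _ (fun x b =>
      (INR (length h) / INR (K - 1) + / INR (K - 1) + c / 2)
      + / (2 * c) * centered_sq_sum K pi (h ++ [(x, b)]))).
    2:{ intros. rewrite length_app, plus_INR. simpl INR. unfold Rdiv. ring. }
    rewrite round_mean_plus, round_mean_const, round_mean_scal_l by auto.
    pose proof (round_mean_centered_sq_sum_le K pi h HK Hpi).
    assert (0 < / (2 * c)) by (apply Rinv_0_lt_compat; lra).
    replace (/ c) with (/ (2 * c) * 2) by (field; lra).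
    unfold Rdiv. nra.
  - unfold g. simpl length. rewrite centered_sq_sum_nil.
    unfold Rdiv. rewrite Rmult_plus_distr_l. simpl INR. lra.
Qed.

Theorem mainTheorem7 (K T : nat) (hK : (2 <= K)%nat) (hT : (1 <= T)%nat)
  (pi : policy) (hpi : is_policy K pi) :
  expval K pi (T - 1) nil (fun h => INR (maxZ K h))
  <= (INR T - 1) / INR (K - 1)
     + sqrt (INR T / 2 * ln (sqrt (INR T) * INR (K - 1)))
     + 2 * sqrt (INR T).
Proof.
  set (c := sqrt (INR T)).
  assert (Hc : 0 < c) by (apply sqrt_lt_R0, (lt_INR 0); lia).
  assert (Hcc : c * c = INR T) by (apply sqrt_sqrt, pos_INR).
  assert (Hn : INR (T - 1) = INR T - 1) by (rewrite minus_INR by lia; simpl; ring).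
  assert (Hnc : (INR T - 1) / c <= c).
  { apply Rmult_le_reg_r with c; auto. unfold Rdiv.
    rewrite Rmult_assoc, Rinv_l by lra. lra. }
  pose proof (expval_maxZ_le K pi (T - 1) c hK hpi Hc) as Hbound.
  pose proof (sqrt_pos (INR T / 2 * ln (c * INR (K - 1)))).
  rewrite Hn in Hbound. lra.
Qed.
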